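(* Let $S$ be a $0$-left cancellative semigroup which is categorical at zero. Then for every $\theta$-constructible set $X\subseteq S'$ there is a right ideal $R$ of $S$ such that $X=R\setminus\{0\}$.
   Context: $S$ is a semigroup with zero $0$; $S'=S\setminus\{0\}$. $S$ is $0$-left cancellative if $st=sr\neq0$ implies $t=r$. $S$ is categorical at zero if for all $r,s,t\in S$, $rs\neq0$ and $st\neq0$ imply $rst\neq0$. For $s\in S$ let $F_s=\{x\in S': sx\neq0\}$, $E_s=sS\setminus\{0\}$, and let $\theta_s:F_s\to E_s$, $\theta_s(x)=sx$ (a bijection, viewed as a partial bijection of $S'$). The inverse hull $\mathcal H(S)$ is the inverse subsemigroup of the symmetric inverse semigroup $\mathcal I(S')$ of all partial bijections of $S'$ generated by $\{\theta_s:s\in S\}$. A subset $X\subseteq S'$ is $\theta$-constructible if the identity map $\mathrm{id}_X$ belongs to $\mathcal H(S)$. A right ideal is a subset $R\subseteq S$ with $RS\subseteq R$ (it contains $0$). *)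

Set Implicit Arguments.

Section Hull.
Variables (S : Type) (mul : S -> S -> S) (z : S).

(* Partial maps of S' = S \ {z} are represented as (functional, injective)
   relations: pmap x y means "x is in the domain and is sent to y". *)
Definition pmap := S -> S -> Prop.

Definition theta (s : S) : pmap :=
  fun x y => x <> z /\ mul s x <> z /\ y = mul s x.

Definition pcomp (g h : pmap) : pmap := fun x w => exists y, h x y /\ g y w.
Definition pinv (h : pmap) : pmap := fun x y => h y x.

(* The inverse hull H(S): the inverse subsemigroup of I(S') generated by the
   theta_s, i.e. the smallest set containing all theta_s and closed under
   composition and inversion. *)
Inductive hull : pmap -> Prop :=
  | hull_theta : forall s, hull (theta s)
  | hull_comp : forall g h, hull g -> hull h -> hull (pcomp g h)
  | hull_inv : forall h, hull h -> hull (pinv h).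

(* X subset of S' is theta-constructible iff id_X belongs to H(S)
   (equality of partial maps is extensional equality of their graphs). *)
Definition theta_constructible (X : S -> Prop) : Prop :=
  exists h, hull h /\ forall x y, h x y <-> (x = y /\ X x).

Definition right_ideal (R : S -> Prop) : Prop :=
  R z /\ forall r s, R r -> R (mul r s).

End Hull.

(* Every partial bijection in the inverse hull commutes with right
   multiplication: if h x = y then x s and y s are simultaneously nonzero,
   and then h (x s) = y s.  For theta_t this is associativity together with
   categoricity at zero, and the property is stable under composition and
   inversion.  Applied to id_X it says that X is closed under nonzero right
   multiples. *)

From Stdlib Require Import Classical.

Section RightCompatible.
Variables (S : Type) (mul : S -> S -> S) (z : S).

Definition right_compatible (h : pmap S) : Prop :=
  forall x y s, h x y ->
    (mul x s <> z <-> mul y s <> z) /\ (mul x s <> z -> h (mul x s) (mul y s)).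

Lemma pcomp_right_compatible (g h : pmap S) :
  right_compatible g -> right_compatible h -> right_compatible (pcomp g h).
Proof.
  intros Hg Hh x y s [w [Hxw Hwy]].
  destruct (Hh x w s Hxw) as [Exw Mxw]; destruct (Hg w y s Hwy) as [Ewy Mwy].
  split.
  - rewrite Exw; exact Ewy.
  - intros Hxs; exists (mul w s); split.
    + exact (Mxw Hxs).
    + apply Mwy, Exw, Hxs.
Qed.

Lemma pinv_right_compatible (h : pmap S) :
  right_compatible h -> right_compatible (pinv h).
Proof.
  intros Hh x y s Hyx; destruct (Hh y x s Hyx) as [Eyx Myx]; split.
  - symmetry; exact Eyx.
  - intros Hxs; apply Myx, Eyx, Hxs.
Qed.

Hypothesis mul_assoc : forall a b c, mul a (mul b c) = mul (mul a b) c.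
Hypothesis zero_r : forall a, mul a z = z.
Hypothesis categorical0 :
  forall r s t, mul r s <> z -> mul s t <> z -> mul (mul r s) t <> z.

Lemma theta_right_compatible (t : S) : right_compatible (theta mul z t).
Proof.
  intros x y s [Hx [Htx ->]]; split; [split|].
  - intros Hxs; exact (categorical0 _ _ _ Htx Hxs).
  - intros Htxs Hxs; apply Htxs; rewrite <- mul_assoc, Hxs; apply zero_r.
  - intros Hxs; split; [exact Hxs | split].
    + rewrite mul_assoc; exact (categorical0 _ _ _ Htx Hxs).
    + symmetry; apply mul_assoc.
Qed.

Lemma hull_right_compatible (h : pmap S) : hull mul z h -> right_compatible h.
Proof.
  induction 1.
  - apply theta_right_compatible.
  - apply pcomp_right_compatible; assumption.
  - apply pinv_right_compatible; assumption.
Qed.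

Lemma theta_constructible_mulr_closed (X : S -> Prop) :
  theta_constructible mul z X ->
  forall x s, X x -> mul x s <> z -> X (mul x s).
Proof.
  intros [h [Hh HidX]] x s Hx Hxs.
  assert (Hxx : h x x) by (apply HidX; split; [reflexivity | exact Hx]).
  exact (proj2 (proj1 (HidX _ _) (proj2 (hull_right_compatible _ Hh x x s Hxx) Hxs))).
Qed.

End RightCompatible.

Lemma right_ideal_add_zero (S : Type) (mul : S -> S -> S) (z : S) (X : S -> Prop) :
  (forall a, mul z a = z) ->
  (forall x s, X x -> mul x s <> z -> X (mul x s)) ->
  right_ideal mul z (fun x => X x \/ x = z).
Proof.
  intros zero_l HX; split; [now right |].
  intros r s [Hr | ->].
  - destruct (classic (mul r s = z)) as [E | E]; [now right | left; exact (HX r s Hr E)].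
  - right; apply zero_l.
Qed.

Theorem proposition4p4 (S : Type) (mul : S -> S -> S) (z : S)
  (mul_assoc : forall a b c, mul a (mul b c) = mul (mul a b) c)
  (zero_l : forall a, mul z a = z)
  (zero_r : forall a, mul a z = z)
  (left_canc0 : forall s t r, mul s t = mul s r -> mul s t <> z -> t = r)
  (categorical0 : forall r s t, mul r s <> z -> mul s t <> z -> mul (mul r s) t <> z)
  (X : S -> Prop) (HXS' : forall x, X x -> x <> z)
  (HX : theta_constructible mul z X) :
  exists R : S -> Prop, right_ideal mul z R /\ (forall x, X x <-> (R x /\ x <> z)).
Proof.
  exists (fun x => X x \/ x = z); split.
  - apply right_ideal_add_zero; [exact zero_l |].
    eapply theta_constructible_mulr_closed; eassumption.
  - intros x; split.
    + intros Hx; split; [now left | exact (HXS' x Hx)].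
    + intros [[Hx | Hx] Hnz]; [exact Hx | contradiction].
Qed.
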